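(* Let $(A,+,\circ)$ be a finite left brace which has a transitive cycle base, let $g$ be an element of a transitive cycle base $X$ of $A$, and let $(A,\bullet)$ be the cycle set given by $a\bullet b:=\lambda_a(g)^{-}\circ b$. Let $H$ be the subgroup of $(A,\circ)$ such that $\mathrm{Ret}(A,\bullet)=A/H$ (namely $H=\{h\in A\mid\lambda_h(g)=g\}$). If $H$ is a normal subgroup of $(A,\circ)$, then $H=\mathrm{Soc}(A)$.
   Context: A left brace is a set $A$ with two operations such that $(A,+)$ is an abelian group, $(A,\circ)$ is a group, and $a\circ(b+c)=a\circ b-a+a\circ c$. $\lambda_a(b):=-a+a\circ b$; $a\mapsto\lambda_a$ is a homomorphism $(A,\circ)\to\mathrm{Aut}(A,+)$. $a^{-}$ is the inverse of $a$ in $(A,\circ)$. $\mathrm{Soc}(A):=\{a\mid\lambda_a=\mathrm{id}_A\}$. A transitive cycle base is a single $\lambda$-orbit generating $(A,+)$. For a cycle set (left multiplications $\sigma_x$ bijective, $(x\cdot y)\cdot(x\cdot z)=(y\cdot x)\cdot(y\cdot z)$), $\mathrm{Ret}(X)$ is the quotient by $x\sim y\iff\sigma_x=\sigma_y$; for $(A,\bullet)$ its classes are the left cosets $a\circ H$. *)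

From mathcomp Require Import all_boot.
Set Implicit Arguments. Unset Strict Implicit. Unset Printing Implicit Defensive.

Record left_brace (T : finType) := LeftBrace {
  badd : T -> T -> T;
  bopp : T -> T;
  bzero : T;
  bmul : T -> T -> T;
  binv : T -> T;
  bone : T;
  baddA : forall a b c, badd a (badd b c) = badd (badd a b) c;
  baddC : forall a b, badd a b = badd b a;
  badd0 : forall a, badd bzero a = a;
  baddN : forall a, badd (bopp a) a = bzero;
  bmulA : forall a b c, bmul a (bmul b c) = bmul (bmul a b) c;
  bmul1 : forall a, bmul bone a = a;
  bmulV : forall a, bmul (binv a) a = bone;
  bbrace : forall a b c,
    bmul a (badd b c) = badd (badd (bmul a b) (bopp a)) (bmul a c)
}.

Section BraceDefs.
Variables (T : finType) (B : left_brace T).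

Definition blambda (a b : T) : T := badd B (bopp B a) (bmul B a b).

Definition bsoc : {set T} := [set a | [forall b, blambda a b == b]].

Definition blorbit (x : T) : {set T} := [set blambda a x | a : T].

Definition add_generates (X : {set T}) : Prop :=
  forall S : {set T},
    bzero B \in S ->
    (forall a b, a \in S -> b \in S -> badd B a b \in S) ->
    (forall a, a \in S -> bopp B a \in S) ->
    X \subset S -> S = [set: T].

Definition transitive_cycle_base (X : {set T}) : Prop :=
  (exists x, X = blorbit x) /\ add_generates X.

Definition bcycle_op (g : T) (a b : T) : T := bmul B (binv B (blambda a g)) b.

Definition bstabH (g : T) : {set T} := [set h | blambda h g == g].

Definition bnormal (H : {set T}) : Prop :=
  forall a h, h \in H -> bmul B (bmul B a h) (binv B a) \in H.

End BraceDefs.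

(* If H is normal and h lies in H, then for every a the element
   h o a = a o (a^- o h o a) has a^- o h o a in H, so lambda_h fixes every
   lambda_a(g).  These form the whole lambda-orbit of g, which is the cycle
   base X and generates (A,+); since lambda_h is additive, lambda_h = id. *)
From mathcomp Require Import all_boot.

Set Implicit Arguments.
Unset Strict Implicit.
Unset Printing Implicit Defensive.

Section BraceTheory.
Variables (T : finType) (B : left_brace T).
Local Notation "a + b" := (badd B a b).
Local Notation "- a" := (bopp B a).
Local Notation "0" := (bzero B).
Local Notation "a * b" := (bmul B a b).
Local Notation "1" := (bone B).
Local Notation inv := (binv B).
Local Notation lam := (blambda B).

Lemma badd0r a : a + 0 = a.
Proof. by rewrite baddC badd0. Qed.

Lemma baddrN a : a + - a = 0.
Proof. by rewrite baddC baddN. Qed.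

Lemma baddKl a b : - a + (a + b) = b.
Proof. by rewrite baddA baddN badd0. Qed.

Lemma baddNKl a b : a + (- a + b) = b.
Proof. by rewrite baddA baddrN badd0. Qed.

Lemma baddIl a b c : a + b = a + c -> b = c.
Proof. by move=> E; rewrite -(baddKl a b) E baddKl. Qed.

Lemma bopp_unique a b : a + b = 0 -> a = - b.
Proof. by move=> E; rewrite -(badd0r a) -(baddrN b) baddA E badd0. Qed.

Lemma boppK a : - - a = a.
Proof. by apply/esym/bopp_unique; rewrite baddrN. Qed.

Lemma boppD a b : - (a + b) = - a + - b.
Proof.
apply/esym/bopp_unique.
by rewrite (baddC B a b) baddA -(baddA B (- a)) baddN badd0r baddN.
Qed.

Lemma bmulrV a : a * inv a = 1.
Proof.
rewrite -{1}(bmul1 B (a * inv a)) -{1}(bmulV B (inv a)).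
by rewrite -bmulA (bmulA B (inv a) a) bmulV bmul1 bmulV.
Qed.

Lemma bmulr1 a : a * 1 = a.
Proof. by rewrite -(bmulV B a) bmulA bmulrV bmul1. Qed.

Lemma binvK a : inv (inv a) = a.
Proof. by rewrite -(bmulr1 (inv (inv a))) -(bmulV B a) bmulA bmulV bmul1. Qed.

Lemma blambdaD a b c : lam a (b + c) = lam a b + lam a c.
Proof. by rewrite /blambda bbrace !baddA. Qed.

Lemma blambda0 a : lam a 0 = 0.
Proof. by apply/esym/(@baddIl (lam a 0)); rewrite -blambdaD !badd0r. Qed.

Lemma blambdaN a b : lam a (- b) = - lam a b.
Proof. by apply: bopp_unique; rewrite -blambdaD baddN blambda0. Qed.

Lemma blambdaM a b c : lam (a * b) c = lam a (lam b c).
Proof.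
rewrite [lam b c]/blambda blambdaD blambdaN /blambda boppD boppK.
by rewrite (baddC B a (- (a * b))) -baddA baddNKl bmulA.
Qed.

Lemma blorbit_lambda a x : blorbit B (lam a x) = blorbit B x.
Proof.
apply/setP => y; apply/imsetP/imsetP => -[b _ ->].
- by exists (b * a); rewrite // blambdaM.
- by exists (b * inv a); rewrite // -blambdaM -bmulA bmulV bmulr1.
Qed.

Lemma bsoc_sub_bstabH g : bsoc B \subset bstabH B g.
Proof. by apply/subsetP => h; rewrite !inE => /forallP. Qed.

Lemma bsoc_fix_generators (X : {set T}) h :
  add_generates B X -> {in X, forall y, lam h y = y} -> h \in bsoc B.
Proof.
move=> genX fixX; pose S := [set b | lam h b == b].
have ST : S = [set: T].
  apply: genX.
  - by rewrite inE blambda0.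
  - by move=> a b; rewrite !inE blambdaD => /eqP -> /eqP ->.
  - by move=> a; rewrite !inE blambdaN => /eqP ->.
  - by apply/subsetP => y /fixX; rewrite inE => ->.
by rewrite inE; apply/forallP => b; have := in_setT b; rewrite -ST inE.
Qed.

Lemma bstabH_normal_fix_orbit g h :
  bnormal B (bstabH B g) -> h \in bstabH B g ->
  {in blorbit B g, forall y, lam h y = y}.
Proof.
move=> normH Hh _ /imsetP [a _ ->].
have Hconj : inv a * h * a \in bstabH B g.
  by have := normH (inv a) h Hh; rewrite binvK.
rewrite -blambdaM.
have -> : h * a = a * (inv a * h * a) by rewrite !bmulA bmulrV bmul1.
by rewrite blambdaM; move: Hconj; rewrite inE => /eqP ->.
Qed.

End BraceTheory.

Theorem mainTheorem4 (T : finType) (B : left_brace T) (X : {set T}) (g : T) :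
  transitive_cycle_base B X -> g \in X ->
  bnormal B (bstabH B g) ->
  bstabH B g = bsoc B.
Proof.
move=> [[x defX] genX] Xg normH.
have orbit_g : X = blorbit B g.
  by move: Xg; rewrite defX => /imsetP [c _ ->]; rewrite blorbit_lambda.
apply/eqP; rewrite eqEsubset bsoc_sub_bstabH andbT.
apply/subsetP => h Hh; apply: (bsoc_fix_generators genX).
by rewrite orbit_g; exact: bstabH_normal_fix_orbit.
Qed.
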